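(* Let $n\ge 2$ be an integer, let $a_1,\dots,a_n>0$ with $\sum_{k=1}^n a_k=1$, and let $c_k,d_k,\beta_k\in\mathbb{R}$ ($k=1,\dots,n$) with $\max_{1\le k\le n}|d_k|<1$. Put $\alpha_1=0$, $\alpha_k=\sum_{j=1}^{k-1}a_j$ for $k=2,\dots,n+1$, and $S_k(x)=a_kx+\alpha_k$. Let $f\in C[0;1]$ be a continuous function satisfying $f=G(f)$, where $$[G(f)](t)=\sum_{k=1}^n\bigl(d_k f(S_k^{-1}(t))+c_k t+\beta_k\bigr)\chi_{I_k}(t),\qquad I_1=[0;\alpha_2],\ I_k=(\alpha_k;\alpha_{k+1}]\ (k\ge2).$$ Suppose $|d_i|/a_i=1$ for all $i=1,\dots,n$. Then for every $\alpha\in(0;1)$ there is a constant $C\ge0$ such that $|f(x)-f(y)|\le C|x-y|^\alpha$ for all $x,y\in[0;1]$.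
   Context: Here $\chi_I$ is the indicator function of the interval $I$. A continuous function $f$ with $G(f)=f$ is called an (affine) self-similar function with self-similarity parameters $\{a_k\},\{c_k\},\{d_k\},\{\beta_k\}$. *)

(* concrete reals R. Indices k run over 1..n as in the paper. *)
From Stdlib Require Import Reals Lra ClassicalEpsilon.
Open Scope R_scope.

Fixpoint sumR (m : nat) (g : nat -> R) : R :=
  match m with
  | O => 0
  | S m' => sumR m' g + g (S m')
  end.

Definition alph (a : nat -> R) (k : nat) : R := sumR (Nat.pred k) a.

Definition Smap (a : nat -> R) (k : nat) (x : R) : R := a k * x + alph a k.
Definition Sinv (a : nat -> R) (k : nat) (t : R) : R := (t - alph a k) / a k.

Definition in_I (a : nat -> R) (k : nat) (t : R) : Prop :=
  if Nat.eqb k 1 then 0 <= t <= alph a 2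
  else alph a k < t <= alph a (S k).

Definition chiI (a : nat -> R) (k : nat) (t : R) : R :=
  if excluded_middle_informative (in_I a k t) then 1 else 0.

Definition Gop (n : nat) (a c d beta : nat -> R) (f : R -> R) (t : R) : R :=
  sumR n (fun k => (d k * f (Sinv a k t) + c k * t + beta k) * chiI a k t).

Definition cont01 (f : R -> R) : Prop :=
  forall x, 0 <= x <= 1 -> limit1_in f (fun y => 0 <= y <= 1) (f x) x.

(* On the piece [alph k, alph (k+1)] the fixed-point equation reads
   f t = d_k f (S_k^-1 t) + c_k t + beta_k (at the left end by continuity), and
   |d_k| = a_k means that mapping a pair of points of the piece onto [0,1] preserves
   the ratio |f y - f x| / |y - x| up to the additive error |c_k|.  A pair at distance
   h >= rho^m, rho = 1 - min a_k, can be rescaled at most m times before its distance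
   exceeds min a_k, where boundedness of f gives a trivial bound.  A pair straddling a
   breakpoint is split there, and a pair containing a breakpoint rescales to a pair
   containing 0 or 1, which never straddles again.  Hence |f y - f x| <= (K0 + K1 m) h,
   a modulus of continuity O(h log(1/h)), which is alpha-Hoelder for every alpha < 1. *)

From Stdlib Require Import Reals Lra Lia ClassicalEpsilon.
Open Scope R_scope.

Lemma Rle_div_iff (x y s : R) : 0 < s -> (x <= y / s <-> x * s <= y).
Proof.
  intros Hs; split; intros H.
  - apply (Rmult_le_compat_r s) in H; [|lra].
    replace (y / s * s) with y in H by (field; lra); exact H.
  - replace x with (x * s / s) by (field; lra).
    apply Rmult_le_compat_r; [left; apply Rinv_0_lt_compat|]; lra.
Qed.

Lemma Rdiv_le_iff (x y s : R) : 0 < s -> (x / s <= y <-> x <= y * s).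
Proof.
  intros Hs; split; intros H.
  - apply (Rmult_le_compat_r s) in H; [|lra].
    replace (x / s * s) with x in H by (field; lra); exact H.
  - replace y with (y * s / s) by (field; lra).
    apply Rmult_le_compat_r; [left; apply Rinv_0_lt_compat|]; lra.
Qed.

Lemma Rdiv_le_mono (x y s : R) : 0 < s -> x <= y -> x / s <= y / s.
Proof. intros Hs Hxy; apply Rmult_le_compat_r; [left; apply Rinv_0_lt_compat|]; lra. Qed.

Lemma sumR_le (g : nat -> R) (p q : nat) :
  (p <= q)%nat -> (forall k, (p < k <= q)%nat -> 0 <= g k) -> sumR p g <= sumR q g.
Proof.
  induction q as [|q IH]; intros Hpq Hg.
  - replace p with 0%nat by lia; lra.
  - destruct (Nat.eq_dec p (S q)) as [->|Hne]; [lra|]; simpl.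
    assert (0 <= g (S q)) by (apply Hg; lia).
    assert (sumR p g <= sumR q g) by (apply IH; [lia|intros; apply Hg; lia]).
    lra.
Qed.

Lemma sumR_eq0 (m : nat) (g : nat -> R) :
  (forall j, (1 <= j <= m)%nat -> g j = 0) -> sumR m g = 0.
Proof.
  induction m as [|m IH]; intros Hg; simpl; [reflexivity|].
  rewrite IH, Hg by (intros; try apply Hg; lia); lra.
Qed.

Lemma sumR_single (m k : nat) (g : nat -> R) :
  (1 <= k <= m)%nat -> (forall j, (1 <= j <= m)%nat -> j <> k -> g j = 0) ->
  sumR m g = g k.
Proof.
  induction m as [|m IH]; intros Hk Hg; [lia|]; simpl.
  destruct (Nat.eq_dec k (S m)) as [->|Hne].
  - rewrite sumR_eq0 by (intros; apply Hg; lia); lra.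
  - rewrite IH, (Hg (S m)) by (intros; try apply Hg; lia); lra.
Qed.

Lemma pos_family_lower_bound (g : nat -> R) (m : nat) :
  (forall k, (1 <= k <= m)%nat -> 0 < g k) ->
  exists mu, 0 < mu /\ forall k, (1 <= k <= m)%nat -> mu <= g k.
Proof.
  induction m as [|m IH]; intros Hg.
  - exists 1; split; [lra|intros; lia].
  - destruct IH as [mu [Hmu Hle]]; [intros; apply Hg; lia|].
    exists (Rmin mu (g (S m))); split.
    + apply Rmin_glb_lt; [lra|apply Hg; lia].
    + intros k Hk; destruct (Nat.eq_dec k (S m)) as [->|]; [apply Rmin_r|].
      eapply Rle_trans; [apply Rmin_l|apply Hle; lia].
Qed.

Lemma family_upper_bound (g : nat -> R) (m : nat) :
  exists B, 0 <= B /\ forall k, (1 <= k <= m)%nat -> g k <= B.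
Proof.
  induction m as [|m [B [HB Hle]]].
  - exists 0; split; [lra|intros; lia].
  - exists (Rmax B (g (S m))); split.
    + eapply Rle_trans; [exact HB|apply Rmax_l].
    + intros k Hk; destruct (Nat.eq_dec k (S m)) as [->|]; [apply Rmax_r|].
      eapply Rle_trans; [apply Hle; lia|apply Rmax_l].
Qed.

Lemma alph_1 (a : nat -> R) : alph a 1 = 0.
Proof. reflexivity. Qed.

Lemma alph_S (a : nat -> R) (k : nat) : (1 <= k)%nat -> alph a (S k) = alph a k + a k.
Proof. intros Hk; destruct k as [|k]; [lia|reflexivity]. Qed.

Lemma Sinv_alph (a : nat -> R) (k : nat) : Sinv a k (alph a k) = 0.
Proof. unfold Sinv, Rdiv; ring. Qed.

Lemma Sinv_alph_S (a : nat -> R) (k : nat) :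
  (1 <= k)%nat -> 0 < a k -> Sinv a k (alph a (S k)) = 1.
Proof. intros Hk Ha; unfold Sinv; rewrite alph_S by exact Hk; field; lra. Qed.

Lemma Sinv_sub (a : nat -> R) (k : nat) (x y : R) :
  0 < a k -> Sinv a k y - Sinv a k x = (y - x) / a k.
Proof. intros Ha; unfold Sinv; field; lra. Qed.

Lemma in_I_bounds (a : nat -> R) (k : nat) (t : R) :
  (1 <= k)%nat -> in_I a k t ->
  alph a k <= t <= alph a (S k) /\ ((2 <= k)%nat -> alph a k < t).
Proof.
  unfold in_I; intros Hk HI.
  destruct (Nat.eqb_spec k 1) as [->|Hk1]; rewrite ?alph_1; split; lra || lia.
Qed.

Lemma in_I_intro (a : nat -> R) (k : nat) (t : R) :
  (1 <= k)%nat -> alph a k <= t <= alph a (S k) -> ((2 <= k)%nat -> alph a k < t) ->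
  in_I a k t.
Proof.
  unfold in_I; intros Hk Ht Hlt.
  destruct (Nat.eqb_spec k 1) as [->|Hk1]; [rewrite alph_1 in Ht; exact Ht|].
  split; [apply Hlt; lia|lra].
Qed.

Lemma limit1_const (r : R) (D : R -> Prop) (x0 : R) : limit1_in (fun _ => r) D r x0.
Proof. exact (limit_free (fun _ => r) D 0 x0). Qed.

Lemma adhDa_right (p q : R) : p < q -> adhDa (fun t => p < t <= q) p.
Proof.
  intros Hpq alp Halp.
  assert (0 < Rmin (alp / 2) (q - p)) by (apply Rmin_glb_lt; lra).
  pose proof (Rmin_l (alp / 2) (q - p)); pose proof (Rmin_r (alp / 2) (q - p)).
  exists (p + Rmin (alp / 2) (q - p)); unfold Rdist; split; [lra|].
  rewrite Rabs_right; lra.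
Qed.

Definition clamp01 (x : R) : R := Rmax 0 (Rmin 1 x).

Lemma clamp01_in (x : R) : 0 <= clamp01 x <= 1.
Proof. unfold clamp01, Rmax, Rmin; repeat destruct Rle_dec; lra. Qed.

Lemma clamp01_id (x : R) : 0 <= x <= 1 -> clamp01 x = x.
Proof. unfold clamp01, Rmax, Rmin; repeat destruct Rle_dec; lra. Qed.

Lemma clamp01_dist (x y : R) : Rabs (clamp01 y - clamp01 x) <= Rabs (y - x).
Proof. unfold clamp01, Rmax, Rmin; repeat destruct Rle_dec; split_Rabs; lra. Qed.

Lemma cont01_bounded (f : R -> R) :
  cont01 f -> exists M, 0 <= M /\ forall x, 0 <= x <= 1 -> Rabs (f x) <= M.
Proof.
  intros Hf.
  set (g := fun x => Rabs (f (clamp01 x))).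
  assert (Hg : forall x, 0 <= x <= 1 -> continuity_pt g x).
  { intros x _ eps Heps.
    destruct (Hf (clamp01 x) (clamp01_in x) eps Heps) as [del [Hdel Hclose]].
    exists del; split; [exact Hdel|]; intros y [_ Hy]; simpl in *; unfold Rdist in *.
    eapply Rle_lt_trans; [apply Rabs_triang_inv2|].
    apply Hclose; split; [apply clamp01_in|].
    eapply Rle_lt_trans; [apply clamp01_dist|exact Hy]. }
  destruct (continuity_ab_maj g 0 1 ltac:(lra) Hg) as [xmax [Hmax _]].
  exists (g xmax); split; [apply Rabs_pos|].
  intros x Hx; specialize (Hmax x Hx); unfold g in Hmax; rewrite clamp01_id in Hmax; auto.
Qed.

Lemma pow_le_one (q : R) (m : nat) : 0 <= q <= 1 -> q ^ m <= 1.
Proof. intros Hq; rewrite <- (pow1 m); apply pow_incr; exact Hq. Qed.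

Lemma INR_mul_pow_le (q : R) (m : nat) : 0 < q < 1 -> INR m * q ^ m <= 1 / (1 - q).
Proof.
  intros Hq.
  assert (Hpow : 0 <= q ^ m) by (apply pow_le; lra).
  assert (Hgeom : (1 - q) * (INR m * q ^ m) <= 1 - q ^ m).
  { clear Hpow; induction m as [|m IH]; [simpl; lra|].
    rewrite S_INR; cbn [pow].
    assert (0 <= q ^ m <= 1) by (split; [apply pow_le|apply pow_le_one]; lra).
    assert (0 <= (1 - q) * (1 - q * q ^ m)) by (apply Rmult_le_pos; nra).
    assert (q * ((1 - q) * (INR m * q ^ m)) <= q * (1 - q ^ m))
      by (apply Rmult_le_compat_l; lra).
    nra. }
  apply Rle_div_iff; [lra|]; nra.
Qed.

Lemma pow_bracket (rho h : R) :
  0 < rho < 1 -> 0 < h <= 1 -> exists m, rho ^ S m <= h <= rho ^ m.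
Proof.
  intros Hrho Hh.
  destruct (pow_lt_1_zero rho ltac:(rewrite Rabs_right; lra) h ltac:(lra)) as [N HN].
  assert (HNh : rho ^ N <= h) by (pose proof (RRle_abs (rho ^ N)); pose proof (HN N (le_n N)); lra).
  clear HN; induction N as [|N IH]; [exists 0%nat; simpl in *; lra|].
  destruct (Rle_dec (rho ^ N) h) as [Hle|Hgt]; [exact (IH Hle)|].
  exists N; lra.
Qed.

Lemma Rpower_le_pow (rho h b : R) (m : nat) :
  0 < rho -> 0 <= b -> 0 < h <= rho ^ m -> Rpower h b <= Rpower rho b ^ m.
Proof.
  intros Hrho Hb Hh.
  eapply Rle_trans; [apply Rle_Rpower_l; [exact Hb|exact Hh]|].
  rewrite <- (Rpower_pow m rho), <- (Rpower_pow m (Rpower rho b)) by (unfold Rpower; apply exp_pos || lra).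
  rewrite !Rpower_mult, Rmult_comm; lra.
Qed.

Lemma Rpower_in_01 (rho b : R) : 0 < rho < 1 -> 0 < b -> 0 < Rpower rho b < 1.
Proof.
  intros Hrho Hb; split; [apply exp_pos|].
  replace 1 with (Rpower 1 b) by (unfold Rpower; rewrite ln_1, Rmult_0_r; apply exp_0).
  apply Rlt_Rpower_l; lra.
Qed.

Lemma linear_log_le_holder (rho al K0 K1 h : R) (m : nat) :
  0 < rho < 1 -> 0 < al < 1 -> 0 <= K0 -> 0 <= K1 -> 0 < h <= rho ^ m ->
  (K0 + K1 * INR (S m)) * h
    <= (K0 + K1 + K1 * (1 / (1 - Rpower rho (1 - al)))) * Rpower h al.
Proof.
  intros Hrho Hal HK0 HK1 Hh.
  set (q := Rpower rho (1 - al)).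
  assert (Hq : 0 < q < 1) by (apply Rpower_in_01; lra).
  assert (Hsplit : h = Rpower h al * Rpower h (1 - al)).
  { rewrite <- Rpower_plus; replace (al + (1 - al)) with 1 by ring.
    rewrite Rpower_1; lra. }
  assert (Hqm : Rpower h (1 - al) <= q ^ m) by (apply Rpower_le_pow; lra).
  assert (Hqm1 : 0 <= q ^ m <= 1) by (split; [apply pow_le|apply pow_le_one]; lra).
  pose proof (INR_mul_pow_le q m Hq); pose proof (pos_INR m).
  assert (Hcoef : (K0 + K1 * INR (S m)) * q ^ m <= K0 + K1 + K1 * (1 / (1 - q)))
    by (rewrite S_INR; nra).
  assert (0 < Rpower h al) by apply exp_pos.
  assert (0 < Rpower h (1 - al)) by apply exp_pos.
  assert (HE : 0 <= K0 + K1 * INR (S m)) by (rewrite S_INR; nra).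
  rewrite Hsplit at 1.
  assert ((K0 + K1 * INR (S m)) * (Rpower h al * Rpower h (1 - al))
          <= (K0 + K1 * INR (S m)) * (Rpower h al * q ^ m))
    by (apply Rmult_le_compat_l; [|apply Rmult_le_compat_l]; lra).
  assert ((K0 + K1 * INR (S m)) * q ^ m * Rpower h al
          <= (K0 + K1 + K1 * (1 / (1 - q))) * Rpower h al)
    by (apply Rmult_le_compat_r; lra).
  lra.
Qed.

Lemma loglip_holder (g : R -> R) (rho K0 K1 : R) :
  0 < rho < 1 -> 0 <= K0 -> 0 <= K1 ->
  (forall m x y, 0 <= x -> x <= y -> y <= 1 -> rho ^ m <= y - x ->
     Rabs (g y - g x) <= (K0 + K1 * INR m) * (y - x)) ->
  forall al, 0 < al < 1 ->
  exists C, 0 <= C /\ forall x y, 0 <= x <= 1 -> 0 <= y <= 1 ->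
    Rabs (g x - g y) <= C * Rpower (Rabs (x - y)) al.
Proof.
  intros Hrho HK0 HK1 Hg al Hal.
  set (C := K0 + K1 + K1 * (1 / (1 - Rpower rho (1 - al)))).
  assert (HC : 0 <= C).
  { pose proof (Rpower_in_01 rho (1 - al) Hrho ltac:(lra)).
    assert (0 < 1 / (1 - Rpower rho (1 - al))) by (apply Rdiv_lt_0_compat; lra).
    unfold C; nra. }
  assert (Hordered : forall x y, 0 <= x -> x <= y -> y <= 1 ->
            Rabs (g y - g x) <= C * Rpower (y - x) al).
  { intros x y Hx Hxy Hy.
    destruct (Req_dec x y) as [<-|Hne].
    { replace (g x - g x) with 0 by ring; rewrite Rabs_R0.
      pose proof (exp_pos (al * ln (x - x))); apply Rmult_le_pos; unfold Rpower; lra. }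
    destruct (pow_bracket rho (y - x) Hrho ltac:(lra)) as [m [Hlo Hhi]].
    eapply Rle_trans; [exact (Hg (S m) x y Hx Hxy Hy Hlo)|].
    apply linear_log_le_holder; lra. }
  exists C; split; [exact HC|]; intros x y Hx Hy.
  destruct (Rle_dec x y) as [Hxy|Hxy].
  - rewrite Rabs_minus_sym, (Rabs_minus_sym x), (Rabs_right (y - x)) by lra.
    apply Hordered; lra.
  - rewrite (Rabs_right (x - y)) by lra; apply Hordered; lra.
Qed.

Section SelfSimilar.

Variables (n : nat) (a c d beta : nat -> R) (f : R -> R).
Hypothesis n_ge2 : (2 <= n)%nat.
Hypothesis a_pos : forall k, (1 <= k <= n)%nat -> 0 < a k.
Hypothesis a_sum : sumR n a = 1.
Hypothesis f_cont : cont01 f.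
Hypothesis f_fixed : forall t, 0 <= t <= 1 -> f t = Gop n a c d beta f t.

Lemma alph_le (j k : nat) : (1 <= j <= k)%nat -> (k <= S n)%nat -> alph a j <= alph a k.
Proof.
  intros Hjk Hk; unfold alph; apply sumR_le; [lia|].
  intros i Hi; left; apply a_pos; lia.
Qed.

Lemma alph_last : alph a (S n) = 1.
Proof. exact a_sum. Qed.

Lemma alph_01 (k : nat) : (1 <= k <= S n)%nat -> 0 <= alph a k <= 1.
Proof.
  intros Hk; rewrite <- (alph_1 a), <- alph_last; split; apply alph_le; lia.
Qed.

Lemma a_add_le (j k : nat) : (1 <= j < k)%nat -> (k <= n)%nat -> a j + a k <= 1.
Proof.
  intros Hjk Hk.
  assert (alph a (S j) <= alph a k) by (apply alph_le; lia).
  assert (alph a (S k) <= 1) by (apply alph_01; lia).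
  assert (0 <= alph a j) by (apply alph_01; lia).
  rewrite !alph_S in * by lia; lra.
Qed.

Lemma piece_cover (x : R) :
  0 <= x <= 1 -> exists k, (1 <= k <= n)%nat /\ alph a k <= x <= alph a (S k).
Proof.
  intros Hx.
  assert (Hcover : forall m, (1 <= m <= n)%nat -> x <= alph a (S m) ->
            exists k, (1 <= k <= m)%nat /\ alph a k <= x <= alph a (S k)).
  { induction m as [|m IH]; intros Hm Hxm; [lia|].
    destruct (Nat.eq_dec m 0) as [->|Hm0]; [exists 1%nat; rewrite alph_1; split; [lia|lra]|].
    destruct (Rle_dec x (alph a (S m))) as [Hle|Hgt].
    - destruct (IH ltac:(lia) Hle) as [k [Hk Hxk]]; exists k; split; [lia|exact Hxk].
    - exists (S m); split; [lia|lra]. }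
  destruct (Hcover n ltac:(lia) ltac:(rewrite alph_last; lra)) as [k [Hk Hxk]].
  exists k; split; [lia|exact Hxk].
Qed.

Lemma in_I_unique (j k : nat) (t : R) :
  (1 <= j <= n)%nat -> (1 <= k <= n)%nat -> in_I a j t -> in_I a k t -> j = k.
Proof.
  intros Hj Hk Hjt Hkt.
  apply in_I_bounds in Hjt as [Hjt Hjlt]; [|lia].
  apply in_I_bounds in Hkt as [Hkt Hklt]; [|lia].
  destruct (Nat.lt_total j k) as [Hlt|[Heq|Hlt]]; [|exact Heq|].
  - assert (alph a (S j) <= alph a k) by (apply alph_le; lia).
    specialize (Hklt ltac:(lia)); lra.
  - assert (alph a (S k) <= alph a j) by (apply alph_le; lia).
    specialize (Hjlt ltac:(lia)); lra.
Qed.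

Lemma Gop_in_I (g : R -> R) (k : nat) (t : R) :
  (1 <= k <= n)%nat -> in_I a k t ->
  Gop n a c d beta g t = d k * g (Sinv a k t) + c k * t + beta k.
Proof.
  intros Hk Hkt; unfold Gop; rewrite (sumR_single n k); [|exact Hk|].
  - unfold chiI; destruct excluded_middle_informative; [ring|contradiction].
  - intros j Hj Hjk; unfold chiI.
    destruct (excluded_middle_informative (in_I a j t)) as [Hjt|]; [|ring].
    exfalso; exact (Hjk (in_I_unique j k t Hj Hk Hjt Hkt)).
Qed.

Lemma Sinv_piece (k : nat) (t : R) :
  (1 <= k <= n)%nat -> alph a k <= t <= alph a (S k) -> 0 <= Sinv a k t <= 1.
Proof.
  intros Hk Ht; assert (Hak : 0 < a k) by (apply a_pos; lia).
  rewrite alph_S in Ht by lia; unfold Sinv.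
  split; [apply Rle_div_iff|apply Rdiv_le_iff]; lra.
Qed.

Lemma fixed_in_I (k : nat) (t : R) :
  (1 <= k <= n)%nat -> in_I a k t -> f t = d k * f (Sinv a k t) + c k * t + beta k.
Proof.
  intros Hk Hkt; rewrite <- (Gop_in_I f k t Hk Hkt); apply f_fixed.
  apply in_I_bounds in Hkt as [Ht _]; [|lia].
  pose proof (alph_01 k ltac:(lia)); pose proof (alph_01 (S k) ltac:(lia)); lra.
Qed.

(* At a breakpoint alph k (k >= 2) the defining sum uses piece k - 1; the equation of
   piece k still holds there because both sides are right-continuous. *)
Lemma fixed_left_end (k : nat) :
  (2 <= k <= n)%nat -> f (alph a k) = d k * f 0 + c k * alph a k + beta k.
Proof.
  intros Hk.
  set (p := alph a k); set (D := fun t => p < t <= alph a (S k)).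
  assert (Hak : 0 < a k) by (apply a_pos; lia).
  assert (HpS : alph a (S k) = p + a k) by (apply alph_S; lia).
  assert (Hp : 0 <= p) by (apply alph_01; lia).
  assert (HS1 : alph a (S k) <= 1) by (apply alph_01; lia).
  assert (Hf_lim : limit1_in f D (f p) p).
  { apply limit1_imp with (fun t => 0 <= t <= 1); [unfold D; intros; lra|].
    apply f_cont; lra. }
  assert (HSinv_lim : limit1_in (Sinv a k) D 0 p).
  { replace 0 with ((p - p) * / a k) by ring.
    exact (limit_mul _ _ D _ _ p (limit_minus _ _ D _ _ p (lim_x D p) (limit1_const p D p))
             (limit1_const (/ a k) D p)). }
  assert (HfSinv_lim : limit1_in (fun t => f (Sinv a k t)) D (f 0) p).
  { apply limit1_imp with (Dgf D (fun y => 0 <= y <= 1) (Sinv a k)).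
    - intros t Ht; split; [exact Ht|unfold D in Ht; apply Sinv_piece; [lia|fold p; lra]].
    - apply (limit_comp (Sinv a k) f D _ 0 (f 0) p HSinv_lim); apply f_cont; lra. }
  apply (single_limit f D _ _ p); [apply adhDa_right; lra|exact Hf_lim|].
  apply limit1_ext with (fun t => d k * f (Sinv a k t) + c k * t + beta k).
  - intros t Ht; symmetry; apply fixed_in_I; [lia|].
    unfold D in Ht; apply in_I_intro; [lia|fold p; lra|intros; fold p; lra].
  - apply limit_plus; [apply limit_plus|apply limit1_const];
      apply limit_mul; try apply limit1_const; [exact HfSinv_lim|apply lim_x].
Qed.

Lemma fixed_piece (k : nat) (t : R) :
  (1 <= k <= n)%nat -> alph a k <= t <= alph a (S k) ->
  f t = d k * f (Sinv a k t) + c k * t + beta k.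
Proof.
  intros Hk Ht.
  destruct (Nat.eq_dec k 1) as [->|Hk1].
  { apply fixed_in_I; [lia|apply in_I_intro; [lia|exact Ht|lia]]. }
  destruct (Req_dec t (alph a k)) as [->|Hne].
  - rewrite Sinv_alph; apply fixed_left_end; lia.
  - apply fixed_in_I; [lia|apply in_I_intro; [lia|exact Ht|intros; lra]].
Qed.

Hypothesis d_abs : forall k, (1 <= k <= n)%nat -> Rabs (d k) = a k.
Variables (mu M Cc : R).
Hypothesis mu_pos : 0 < mu.
Hypothesis mu_le : forall k, (1 <= k <= n)%nat -> mu <= a k.
Hypothesis f_bound : forall x, 0 <= x <= 1 -> Rabs (f x) <= M.
Hypothesis c_bound : forall k, (1 <= k <= n)%nat -> Rabs (c k) <= Cc.

Let rho := 1 - mu.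
Let A := 2 * M / mu.

Lemma a_le_rho (k : nat) : (1 <= k <= n)%nat -> a k <= rho.
Proof.
  intros Hk; unfold rho; destruct (Nat.eq_dec k 1) as [->|Hk1].
  - pose proof (a_add_le 1 2 ltac:(lia) ltac:(lia)); pose proof (mu_le 2 ltac:(lia)); lra.
  - pose proof (a_add_le 1 k ltac:(lia) ltac:(lia)); pose proof (mu_le 1 ltac:(lia)); lra.
Qed.

Lemma rho_bounds : 0 < rho < 1.
Proof.
  pose proof (a_le_rho 1 ltac:(lia)); pose proof (mu_le 1 ltac:(lia)).
  unfold rho in *; lra.
Qed.

Lemma rho_pow_rescale (m : nat) (h : R) (k : nat) :
  (1 <= k <= n)%nat -> rho ^ S m <= h -> rho ^ m <= h / a k.
Proof.
  intros Hk Hm; apply Rle_div_iff; [apply a_pos; exact Hk|]; simpl in Hm.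
  assert (0 <= rho ^ m) by (apply pow_le; pose proof rho_bounds; lra).
  assert (rho ^ m * a k <= rho ^ m * rho) by (apply Rmult_le_compat_l; [|apply a_le_rho]; auto).
  lra.
Qed.

Lemma A_le_add_Cc_INR (m : nat) : A <= A + Cc * INR m.
Proof.
  assert (0 <= Cc) by (eapply Rle_trans; [apply Rabs_pos|apply (c_bound 1); lia]).
  pose proof (pos_INR m); nra.
Qed.

Lemma A_nonneg : 0 <= A.
Proof.
  pose proof (f_bound 0 ltac:(lra)); pose proof (Rabs_pos (f 0)).
  unfold A; apply Rle_div_iff; [exact mu_pos|lra].
Qed.

Lemma crude_bound (u v h K : R) :
  0 <= u <= 1 -> 0 <= v <= 1 -> mu <= h -> A <= K -> Rabs (f u - f v) <= K * h.
Proof.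
  intros Hu Hv Hh HK.
  assert (Hdiam : Rabs (f u - f v) <= A * mu).
  { unfold A; replace (2 * M / mu * mu) with (2 * M) by (field; lra).
    unfold Rminus; eapply Rle_trans; [apply Rabs_triang|]; rewrite Rabs_Ropp.
    pose proof (f_bound u Hu); pose proof (f_bound v Hv); lra. }
  pose proof A_nonneg; nra.
Qed.

Lemma rescale_bound (k : nat) (x y h K : R) :
  (1 <= k <= n)%nat -> alph a k <= x -> x <= y -> y <= alph a (S k) -> y - x <= h ->
  Rabs (f (Sinv a k y) - f (Sinv a k x)) <= K * (h / a k) ->
  Rabs (f y - f x) <= (K + Cc) * h.
Proof.
  intros Hk Hx Hxy Hy Hh Hrescaled.
  assert (Hak : 0 < a k) by (apply a_pos; exact Hk).
  rewrite (fixed_piece k x), (fixed_piece k y) by (auto; lra).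
  replace (d k * f (Sinv a k y) + c k * y + beta k - (d k * f (Sinv a k x) + c k * x + beta k))
    with (d k * (f (Sinv a k y) - f (Sinv a k x)) + c k * (y - x)) by ring.
  eapply Rle_trans; [apply Rabs_triang|]; rewrite !Rabs_mult, (d_abs k Hk), (Rabs_right (y - x)) by lra.
  assert (a k * Rabs (f (Sinv a k y) - f (Sinv a k x)) <= K * h).
  { replace (K * h) with (a k * (K * (h / a k))) by (field; lra).
    apply Rmult_le_compat_l; lra. }
  assert (Rabs (c k) * (y - x) <= Cc * h)
    by (apply Rmult_le_compat; [apply Rabs_pos|lra|apply c_bound, Hk|lra]).
  lra.
Qed.

Lemma left_end_bound (m : nat) : forall k y h,
  (1 <= k <= n)%nat -> alph a k <= y <= 1 -> y - alph a k <= h <= 1 -> rho ^ m <= h ->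
  Rabs (f y - f (alph a k)) <= (A + Cc * INR m) * h.
Proof.
  induction m as [|m IH]; intros k y h Hk Hy Hh Hm.
  { pose proof rho_bounds; pose proof (alph_01 k ltac:(lia)).
    apply crude_bound; [lra|lra|simpl in Hm; unfold rho in *; lra|apply A_le_add_Cc_INR]. }
  assert (Hak : 0 < a k) by (apply a_pos; exact Hk).
  pose proof (alph_01 k ltac:(lia)).
  destruct (Rle_lt_dec h (a k)) as [Hhk|Hhk];
    [|apply crude_bound; [lra|lra|pose proof (mu_le k Hk); lra|apply A_le_add_Cc_INR]].
  assert (HpS : alph a (S k) = alph a k + a k) by (apply alph_S; lia).
  rewrite S_INR, Rmult_plus_distr_l, Rmult_1_r, <- Rplus_assoc.
  apply (rescale_bound k); [exact Hk|lra|lra|lra|lra|].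
  rewrite Sinv_alph.
  pose proof (IH 1%nat (Sinv a k y) (h / a k)) as IH1; rewrite alph_1 in IH1; apply IH1.
  - lia.
  - apply Sinv_piece; [exact Hk|lra].
  - rewrite Rminus_0_r; split.
    + unfold Sinv; apply Rdiv_le_mono; lra.
    + apply Rdiv_le_iff; lra.
  - apply rho_pow_rescale; [exact Hk|exact Hm].
Qed.

Lemma right_end_bound (m : nat) : forall k x h,
  (1 <= k <= n)%nat -> 0 <= x <= alph a (S k) -> alph a (S k) - x <= h <= 1 ->
  rho ^ m <= h ->
  Rabs (f (alph a (S k)) - f x) <= (A + Cc * INR m) * h.
Proof.
  induction m as [|m IH]; intros k x h Hk Hx Hh Hm.
  { pose proof rho_bounds; pose proof (alph_01 (S k) ltac:(lia)).
    apply crude_bound; [lra|lra|simpl in Hm; unfold rho in *; lra|apply A_le_add_Cc_INR]. }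
  assert (Hak : 0 < a k) by (apply a_pos; exact Hk).
  pose proof (alph_01 (S k) ltac:(lia)).
  destruct (Rle_lt_dec h (a k)) as [Hhk|Hhk];
    [|apply crude_bound; [lra|lra|pose proof (mu_le k Hk); lra|apply A_le_add_Cc_INR]].
  assert (HpS : alph a (S k) = alph a k + a k) by (apply alph_S; lia).
  rewrite S_INR, Rmult_plus_distr_l, Rmult_1_r, <- Rplus_assoc.
  apply (rescale_bound k); [exact Hk|lra|lra|lra|lra|].
  rewrite Sinv_alph_S by (lia || exact Hak).
  pose proof (IH n (Sinv a k x) (h / a k)) as IHn; rewrite alph_last in IHn; apply IHn.
  - lia.
  - apply Sinv_piece; [exact Hk|lra].
  - split.
    + rewrite <- (Sinv_alph_S a k) at 1 by (lia || exact Hak).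
      rewrite Sinv_sub by exact Hak; apply Rdiv_le_mono; lra.
    + apply Rdiv_le_iff; lra.
  - apply rho_pow_rescale; [exact Hk|exact Hm].
Qed.

Lemma loglip_bound (m : nat) : forall x y h,
  0 <= x -> x <= y -> y <= 1 -> y - x <= h -> h <= 1 -> rho ^ m <= h ->
  Rabs (f y - f x) <= 2 * (A + Cc * INR m) * h.
Proof.
  induction m as [|m IH]; intros x y h Hx Hxy Hy Hh Hh1 Hm.
  { pose proof rho_bounds; pose proof (A_le_add_Cc_INR 0).
    apply crude_bound; [lra|lra|simpl in Hm; unfold rho in *; lra|].
    pose proof A_nonneg; simpl; lra. }
  destruct (piece_cover x ltac:(lra)) as [k [Hk Hxk]].
  assert (Hak : 0 < a k) by (apply a_pos; exact Hk).
  assert (HCc : 0 <= Cc) by (eapply Rle_trans; [apply Rabs_pos|apply (c_bound 1); lia]).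
  destruct (Rle_dec y (alph a (S k))) as [Hyk|Hyk].
  - destruct (Rle_lt_dec h (a k)) as [Hhk|Hhk].
    2: { pose proof (A_le_add_Cc_INR (S m)); pose proof (mu_le k Hk).
         pose proof A_nonneg; apply crude_bound; lra. }
    eapply Rle_trans;
      [apply (rescale_bound k x y h (2 * (A + Cc * INR m))); [exact Hk|lra|lra|lra|lra|]|].
    + pose proof (Sinv_piece k x Hk ltac:(lra)); pose proof (Sinv_piece k y Hk ltac:(lra)).
      pose proof (Sinv_sub a k x y Hak).
      assert (0 <= (y - x) / a k) by (apply Rle_div_iff; lra).
      assert ((y - x) / a k <= h / a k) by (apply Rdiv_le_mono; lra).
      assert (h / a k <= 1) by (apply Rdiv_le_iff; lra).
      apply IH; try lra; apply rho_pow_rescale; assumption.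
    + rewrite S_INR; apply Rmult_le_compat_r; lra.
  - apply Rnot_le_lt in Hyk.
    assert (HkS : (S k <= n)%nat).
    { destruct (Nat.eq_dec k n) as [->|]; [rewrite alph_last in Hyk; lra|lia]. }
    pose proof (left_end_bound (S m) (S k) y h ltac:(lia) ltac:(lra) ltac:(lra) Hm).
    pose proof (right_end_bound (S m) k x h Hk ltac:(lra) ltac:(lra) Hm).
    replace (f y - f x) with ((f y - f (alph a (S k))) + (f (alph a (S k)) - f x)) by ring.
    eapply Rle_trans; [apply Rabs_triang|]; lra.
Qed.

End SelfSimilar.

Theorem theorem4 (n : nat) (a c d beta : nat -> R) (f : R -> R) :
  (2 <= n)%nat ->
  (forall k, (1 <= k <= n)%nat -> 0 < a k) ->
  sumR n a = 1 ->
  (forall k, (1 <= k <= n)%nat -> Rabs (d k) < 1) ->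
  cont01 f ->
  (forall t, 0 <= t <= 1 -> f t = Gop n a c d beta f t) ->
  (forall i, (1 <= i <= n)%nat -> Rabs (d i) / a i = 1) ->
  forall al : R, 0 < al < 1 ->
  exists C : R, 0 <= C /\
    forall x y, 0 <= x <= 1 -> 0 <= y <= 1 ->
      Rabs (f x - f y) <= C * Rpower (Rabs (x - y)) al.
Proof.
  intros Hn Ha Hsum _ Hc Hf Hda al Hal.
  assert (Hd : forall k, (1 <= k <= n)%nat -> Rabs (d k) = a k)
    by (intros k Hk; apply Rdiv_diag_uniq, Hda, Hk).
  destruct (pos_family_lower_bound a n Ha) as [mu [Hmu Hmu_le]].
  destruct (cont01_bounded f Hc) as [M [HM HfM]].
  destruct (family_upper_bound (fun k => Rabs (c k)) n) as [Cc [HCc HcCc]].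
  pose proof (rho_bounds n a Hn Ha Hsum mu Hmu Hmu_le) as Hrho.
  assert (0 <= 2 * M / mu) by (apply Rle_div_iff; lra).
  apply (loglip_holder f (1 - mu) (2 * (2 * M / mu)) (2 * Cc)); [exact Hrho|lra|lra| |exact Hal].
  intros m x y Hx Hxy Hy Hm.
  replace ((2 * (2 * M / mu) + 2 * Cc * INR m) * (y - x))
    with (2 * (2 * M / mu + Cc * INR m) * (y - x)) by ring.
  exact (loglip_bound n a c d beta f Hn Ha Hsum Hc Hf Hd mu M Cc Hmu Hmu_le HfM HcCc
           m x y (y - x) Hx Hxy Hy (Rle_refl _) ltac:(lra) Hm).
Qed.
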